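(* Let $C\subseteq\mathbb{S}$ be a nonempty closed s-convex set. Then $\operatorname{sext}C\neq\emptyset$, $\operatorname{sext}C$ is hull-addible, and $C=\operatorname{sco}(\operatorname{sext}C)$.
   Context: Standing setting: $n\ge 2$; $o$ denotes the zero vector of $\mathbb{R}^n$. $\Phi:\mathbb{R}^n\to\mathbb{R}_+:=[0,\infty)$ is a continuous function with $\Phi(tx)=t\Phi(x)$ for all $x\in\mathbb{R}^n$, $t\ge 0$, and $\Phi(x)=0$ iff $x=o$. Set $\mathbb{S}:=\{x\in\mathbb{R}^n\mid \Phi(x)=1\}$ (with the topology induced from $\mathbb{R}^n$) and $\rho:\mathbb{R}^n\to\{o\}\cup\mathbb{S}$, $\rho(x):=x/\Phi(x)$ for $x\neq o$, $\rho(o):=o$. For $x,y\in\mathbb{S}$, $\lambda\in[0,1]$, $\lambda x+_s(1-\lambda)y:=\rho(\lambda x+(1-\lambda)y)$. A nonempty set $S\subseteq\mathbb{S}$ is called s-convex if $\lambda x+_s(1-\lambda)y\in S$ for all $x,y\in S$ and $\lambda\in[0,1]$. For s-convex $C$, a point $x\in C$ is an s-extreme point of $C$ if whenever $x_1,x_2\in C$, $\lambda\in(0,1)$ and $x=\lambda x_1+_s(1-\lambda)x_2$, then $x_1=x_2$; $\operatorname{sext}C$ denotes the set of s-extreme points of $C$. A nonempty set $S\subseteq\mathbb{S}$ is hull-addible if $o\notin\operatorname{conv}S$; for such $S$, $\operatorname{sco}S:=\rho(\operatorname{conv}S)$. *)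

From HB Require Import structures.
From mathcomp Require Import all_boot all_order all_algebra.
From mathcomp Require Import all_classical all_reals all_analysis.
Set Implicit Arguments. Unset Strict Implicit. Unset Printing Implicit Defensive.
Import Order.TTheory GRing.Theory Num.Theory numFieldNormedType.Exports.
Local Open Scope classical_set_scope.
Local Open Scope ring_scope.

Section SConvex.
Variables (R : realType) (n : nat) (Phi : 'rV[R]_n -> R).

Definition sph : set 'rV[R]_n := [set x | Phi x = 1].

Definition rho (x : 'rV[R]_n) : 'rV[R]_n :=
  if x == 0 then 0 else (Phi x)^-1 *: x.

Definition sadd (l : R) (x y : 'rV[R]_n) : 'rV[R]_n :=
  rho (l *: x + (1 - l) *: y).

Definition s_convex (S : set 'rV[R]_n) : Prop :=
  S !=set0 /\ S `<=` sph /\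
  forall x y l, S x -> S y -> 0 <= l <= 1 -> S (sadd l x y).

Definition s_extreme (C : set 'rV[R]_n) (x : 'rV[R]_n) : Prop :=
  C x /\ forall x1 x2 l, C x1 -> C x2 -> 0 < l < 1 -> x = sadd l x1 x2 -> x1 = x2.

Definition sext (C : set 'rV[R]_n) : set 'rV[R]_n := [set x | s_extreme C x].

Definition conv (S : set 'rV[R]_n) : set 'rV[R]_n :=
  [set x | exists (k : nat) (w : 'I_k -> R) (p : 'I_k -> 'rV[R]_n),
     (forall i, 0 <= w i) /\ \sum_(i < k) w i = 1 /\ (forall i, S (p i)) /\
     x = \sum_(i < k) w i *: p i].

Definition hull_addible (S : set 'rV[R]_n) : Prop :=
  S !=set0 /\ S `<=` sph /\ ~ conv S 0.

Definition sco (S : set 'rV[R]_n) : set 'rV[R]_n := rho @` conv S.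

End SConvex.

From Pilot Require Import Defs.
From HB Require Import structures.
From mathcomp Require Import all_boot all_order all_algebra.
From mathcomp Require Import all_classical all_reals all_analysis.
From mathcomp Require Import ring.
Import Order.TTheory GRing.Theory Num.Theory numFieldNormedType.Exports.
Local Open Scope classical_set_scope.
Local Open Scope ring_scope.
Set Implicit Arguments. Unset Strict Implicit. Unset Printing Implicit Defensive.

(* We pass to the cone  K = {t c | t >= 0, c in C}.  Since C is s-convex, K is
   a convex cone, and since rho(o) = o is not on the sphere, K is pointed
   (u, w in K and u + w = 0 force u = 0).  Closedness of C only enters through
   closedness of K along lines avoiding the origin.

   For v in K the "face directions" L(v) are the d with v +- e d in K for some
   e > 0; they form a linear subspace.  We show by induction on an upper bound
   for the dimension of L(v) that every v in K is a nonnegative combination of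
   s-extreme points of C: if rho(v) is not s-extreme, then v = a x1 + b x2 with
   x1 != x2 in C; pushing x1 - g x2 and x2 - h x1 to the boundary of K gives
   v = p u1 + q u2 with u1, u2 in K and dim L(ui) < dim L(v).
   The theorem follows: C = rho(conv (sext C)), and 0 is not in conv (sext C)
   because K is pointed. *)

Section SKreinMilman.
Variables (R : realType) (n : nat) (Phi : 'rV[R]_n -> R).
Hypothesis Phi_cont : continuous Phi.
Hypothesis Phi_ge0 : forall x, 0 <= Phi x.
Hypothesis Phi_hom : forall (t : R) x, 0 <= t -> Phi (t *: x) = t * Phi x.
Hypothesis Phi_eq0 : forall x, Phi x = 0 <-> x = 0.

Local Notation V := 'rV[R]_n.
Local Notation rho := (Defs.rho Phi).

Lemma Phi_gt0 x : x != 0 -> 0 < Phi x.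
Proof.
by move=> x0; rewrite lt_def Phi_ge0 andbT; apply/eqP => /Phi_eq0 /eqP; rewrite (negbTE x0).
Qed.

Lemma rhoE x : x != 0 -> rho x = (Phi x)^-1 *: x.
Proof. by move=> x0; rewrite /Defs.rho (negbTE x0). Qed.

Lemma rho_scale x : x != 0 -> x = Phi x *: rho x.
Proof. by move=> x0; rewrite rhoE // scalerA divff ?scale1r // gt_eqF ?Phi_gt0. Qed.

Lemma rhoZ k x : 0 < k -> x != 0 -> rho (k *: x) = rho x.
Proof.
move=> k0 x0; have kx0 : k *: x != 0 by rewrite scaler_eq0 negb_or gt_eqF.
rewrite !rhoE // Phi_hom ?ltW // scalerA invfM; congr (_ *: _).
by field; rewrite !gt_eqF ?Phi_gt0.
Qed.

Lemma ratio01 (t s : R) : 0 <= t -> t <= s -> 0 < s -> 0 <= t / s <= 1.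
Proof.
by move=> t0 ts s0; apply/andP; split; [rewrite divr_ge0 // ltW | rewrite ler_pdivrMr // mul1r].
Qed.

Lemma half01 : 0 <= (1 / 2 : R) <= 1.
Proof. by apply: ratio01; rewrite ?ler1n. Qed.

Variable C : set V.
Hypothesis C_sconv : s_convex Phi C.
Hypothesis C_closed : closed C.

Lemma PhiC x : C x -> Phi x = 1.
Proof. by case: C_sconv => _ [+ _] => /[apply]. Qed.

Lemma C_neq0 x : C x -> x != 0.
Proof.
move=> /PhiC h; apply/eqP => x0; move: h.
by rewrite x0 (proj2 (Phi_eq0 0) erefl) => /eqP; rewrite eq_sym oner_eq0.
Qed.

Lemma rho_C x : C x -> rho x = x.
Proof. by move=> Cx; rewrite rhoE ?C_neq0 // PhiC // invr1 scale1r. Qed.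

Lemma C_sadd x y l : C x -> C y -> 0 <= l <= 1 -> C (sadd Phi l x y).
Proof. by case: C_sconv => _ [_ h] /h h1 /h1; apply. Qed.

Lemma comb_eq (t s : R) (x y : V) : 0 < t + s ->
  (t / (t + s)) *: x + (1 - t / (t + s)) *: y = (t + s)^-1 *: (t *: x + s *: y).
Proof.
move=> ts; rewrite scalerDr !scalerA; congr (_ *: _ + _ *: _); first by rewrite mulrC.
by field; rewrite gt_eqF.
Qed.

Lemma ratio_sum01 (t s : R) : 0 <= t -> 0 <= s -> 0 < t + s -> 0 <= t / (t + s) <= 1.
Proof. by move=> t0 s0 ts; apply: ratio01; rewrite // lerDl. Qed.

(* The segment between two points of C avoids the origin, as rho 0 = 0 is
   not on the sphere. *)
Lemma comb_nz t s x y : C x -> C y -> 0 <= t -> 0 <= s -> 0 < t + s ->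
  t *: x + s *: y != 0.
Proof.
move=> Cx Cy t0 s0 ts; apply/negP => /eqP h.
have := C_sadd Cx Cy (ratio_sum01 t0 s0 ts).
by rewrite /sadd comb_eq // h scaler0 /Defs.rho eqxx => /C_neq0; rewrite eqxx.
Qed.

Lemma indep x1 x2 a b : C x1 -> C x2 -> x1 != x2 -> a *: x1 + b *: x2 = 0 ->
  a = 0 /\ b = 0.
Proof.
move=> C1 C2 ne; wlog a0 : a b / 0 <= a.
  move=> hw h; have [a0|a0] := leP 0 a; first exact: hw a b a0 h.
  have [] := hw (- a) (- b); rewrite ?oppr_ge0 ?ltW //.
    by rewrite !scaleNr -opprD h oppr0.
  by move=> /eqP; rewrite oppr_eq0 => /eqP -> /eqP; rewrite oppr_eq0 => /eqP ->.
move=> h; have [b0|b0] := leP 0 b.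
  have [/eqP|ab] := eqVneq (a + b) 0; first by rewrite paddr_eq0 // => /andP[/eqP ->/eqP ->].
  by have := comb_nz C1 C2 a0 b0; rewrite h eqxx lt_def ab addr_ge0 // => /(_ isT).
have ax1 : a *: x1 = - b *: x2 by rewrite scaleNr; apply/eqP; rewrite -subr_eq0 opprK h.
have ab : a = - b.
  have := congr1 Phi ax1; rewrite (Phi_hom _ a0) Phi_hom ?oppr_ge0 ?ltW //.
  by rewrite (PhiC C1) (PhiC C2) !mulr1.
have nb0 : - b != 0 by rewrite oppr_eq0 lt_eqF.
by move: ax1; rewrite ab => /(scalerI nb0) x12; move: ne; rewrite x12 eqxx.
Qed.

Definition cone (v : V) : Prop := exists t c, 0 <= t /\ C c /\ v = t *: c.

Lemma cone_C c : C c -> cone c.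
Proof. by move=> Cc; exists 1, c; rewrite ler01 scale1r. Qed.

Lemma cone0 : cone 0.
Proof. by case: C_sconv => -[c Cc] _; exists 0, c; rewrite lexx scale0r. Qed.

Lemma coneZ k u : 0 <= k -> cone u -> cone (k *: u).
Proof. by move=> k0 [t [c [t0 [Cc ->]]]]; exists (k * t), c; rewrite mulr_ge0 // scalerA. Qed.

Lemma cone_of_rho v : v != 0 -> C (rho v) -> cone v.
Proof. by move=> v0 Cv; exists (Phi v), (rho v); rewrite Phi_ge0 -rho_scale. Qed.

Lemma rho_cone v : v != 0 -> cone v -> C (rho v).
Proof.
move=> + [t [c [t0 [Cc ve]]]]; rewrite ve scaler_eq0 negb_or => /andP [tn0 _].
by rewrite rhoZ ?rho_C // ?C_neq0 // lt_def tn0.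
Qed.

(* s-convexity of C makes its cone closed under addition. *)
Lemma coneD u w : cone u -> cone w -> cone (u + w).
Proof.
move=> [t [x [t0 [Cx ->]]]] [s [y [s0 [Cy ->]]]].
have [/eqP|ts] := eqVneq (t + s) 0.
  by rewrite paddr_eq0 // => /andP [/eqP -> /eqP ->]; rewrite !scale0r addr0; exact: cone0.
have tsp : 0 < t + s by rewrite lt_def ts addr_ge0.
apply: cone_of_rho; first exact: comb_nz.
have -> : t *: x + s *: y = (t + s) *: ((t / (t + s)) *: x + (1 - t / (t + s)) *: y).
  by rewrite comb_eq // scalerA divff ?scale1r // gt_eqF.
rewrite rhoZ //; first exact: C_sadd (ratio_sum01 t0 s0 tsp).
by rewrite comb_eq // scaler_eq0 negb_or invr_eq0 ts comb_nz.
Qed.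

Lemma cone_pointed u w : cone u -> cone w -> u + w = 0 -> u = 0.
Proof.
move=> [t [x [t0 [Cx ue]]]] [s [y [s0 [Cy we]]]] h.
have [/eqP|ts] := eqVneq (t + s) 0.
  by rewrite paddr_eq0 // ue => /andP [/eqP -> _]; rewrite scale0r.
have tsp : 0 < t + s by rewrite lt_def ts addr_ge0.
by move: (comb_nz Cx Cy t0 s0 tsp); rewrite -ue -we h eqxx.
Qed.

Lemma cone_conv a b l : cone a -> cone b -> 0 <= l <= 1 -> cone (l *: a + (1 - l) *: b).
Proof. by move=> Ka Kb /andP [l0 l1]; apply: coneD; apply: coneZ; rewrite ?subr_ge0. Qed.

Lemma cone_shrink v d t : cone v -> cone (v + d) -> 0 <= t <= 1 -> cone (v + t *: d).
Proof.
move=> Kv Kvd t01.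
have -> : v + t *: d = t *: (v + d) + (1 - t) *: v by apply/rowP => i; rewrite !mxE; ring.
exact: cone_conv.
Qed.

Lemma cone_line_closed (p q : V) (a b : R) : a < b -> (forall s : R, p + s *: q != 0) ->
  (forall s, a < s < b -> cone (p + s *: q)) -> cone (p + b *: q).
Proof.
move=> ab nz hs; apply: cone_of_rho => //.
pose f := fun s : R => (Phi (p + s *: q))^-1 *: (p + s *: q).
have fE s : rho (p + s *: q) = f s by rewrite rhoE.
rewrite fE; apply: (@closed_cvg R V b^'- _ f C C_closed).
  near=> s; rewrite -fE; apply: rho_cone => //; apply: hs; apply/andP; split.
    by near: s; exact: nbhs_left_gt.
  by near: s; exact: nbhs_left_lt.
apply: cvg_at_left_filter.
have hc : {for b, continuous (fun s : R => p + s *: q)}.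
  have h1 : {for b, continuous (fun s : R => s *: q)}.
    by apply: continuousZr_tmp; exact: cvg_id.
  have h0 : {for b, continuous (fun _ : R => p)} by exact: cst_continuous.
  exact: (@continuousD R V R (fun _ => p) (fun s => s *: q) b h0 h1).
have pc : {for b, continuous (fun s : R => Phi (p + s *: q))}.
  exact: (@continuous_comp R V R _ Phi b hc (@Phi_cont (p + b *: q))).
have vc : {for b, continuous (fun s : R => (Phi (p + s *: q))^-1)}.
  by apply: continuousV => //; rewrite gt_eqF // Phi_gt0.
exact: (@continuousZ R V R (fun s => (Phi (p + s *: q))^-1) (fun s => p + s *: q) b vc hc).
Unshelve. all: by end_near.
Qed.

(* Face directions of v: the directions along which v can move both ways
   inside the cone.  They span the smallest face of the cone containing v. *)
Definition face_dir (v : V) (d : V) : Prop :=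
  exists2 e, 0 < e & cone (v + e *: d) /\ cone (v - e *: d).

Lemma face_dir_cone v d : face_dir v d -> cone v.
Proof.
move=> [e e0 [K1 K2]]; have := cone_conv K1 K2 half01.
suff -> : 1 / 2 *: (v + e *: d) + (1 - 1 / 2) *: (v - e *: d) = v by [].
by apply/rowP => i; rewrite !mxE; field.
Qed.

Lemma face_dir_ball v d : face_dir v d -> exists2 e, 0 < e &
  forall f, 0 <= f <= e -> cone (v + f *: d) /\ cone (v - f *: d).
Proof.
move=> Lvd; have Kv := face_dir_cone Lvd; case: Lvd => [e e0 [K1 K2]].
exists e => // f /andP [f0 fe]; have t01 : 0 <= f / e <= 1 by exact: ratio01.
have step (s : R) : cone (v + (s * e) *: d) -> cone (v + (s * f) *: d).
  move=> Ks; have := cone_shrink Kv Ks t01.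
  by rewrite scalerA mulrCA divfK ?gt_eqF.
split; first by have := step 1; rewrite !mul1r; apply.
by have := step (-1); rewrite !mulN1r !scaleNr; apply.
Qed.

Lemma face_dir0 v : cone v -> face_dir v 0.
Proof. by move=> Kv; exists 1 => //; rewrite scaler0 addr0 subr0. Qed.

Lemma face_dirZ v d k : face_dir v d -> face_dir v (k *: d).
Proof.
move=> Lvd; have Kv := face_dir_cone Lvd; case: Lvd => [e e0 [K1 K2]].
have [->|kn0] := eqVneq k 0; first by rewrite scale0r; exact: face_dir0.
have [kp|kn] := ltP 0 k.
  by exists (e / k); rewrite ?divr_gt0 // !scalerA divfK.
exists (e / - k); first by rewrite divr_gt0 // oppr_gt0 lt_neqAle kn0 kn.
rewrite !scalerA; have -> : e / - k * k = - e by field.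
by rewrite !scaleNr opprK.
Qed.

Lemma face_dirD v d1 d2 : face_dir v d1 -> face_dir v d2 -> face_dir v (d1 + d2).
Proof.
move=> /face_dir_ball [e1 e10 H1] /face_dir_ball [e2 e20 H2].
pose e := Num.min e1 e2; have e0 : 0 < e by rewrite lt_min e10 e20.
have [K1 K2] : cone (v + e *: d1) /\ cone (v - e *: d1).
  by apply: H1; rewrite ltW //= /e ge_min lexx.
have [K3 K4] : cone (v + e *: d2) /\ cone (v - e *: d2).
  by apply: H2; rewrite ltW //= /e ge_min lexx orbT.
exists (e / 2); first by rewrite divr_gt0.
split.
  have := cone_conv K1 K3 half01.
  suff -> : 1 / 2 *: (v + e *: d1) + (1 - 1 / 2) *: (v + e *: d2) = v + e / 2 *: (d1 + d2) by [].
  by apply/rowP => i; rewrite !mxE; field.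
have := cone_conv K2 K4 half01.
suff -> : 1 / 2 *: (v - e *: d1) + (1 - 1 / 2) *: (v - e *: d2) = v - e / 2 *: (d1 + d2) by [].
by apply/rowP => i; rewrite !mxE; field.
Qed.

Lemma face_dir_span v (s : seq V) : cone v -> (forall x, x \in s -> face_dir v x) ->
  forall w, w \in span s -> face_dir v w.
Proof.
move=> Kv; elim: s => [|x s IH] hs w.
  by rewrite span_nil memv0 => /eqP ->; exact: face_dir0.
rewrite span_cons => /memv_addP [u /vlineP [k ->] [z zs ->]].
apply: face_dirD; first by apply: face_dirZ; apply: hs; rewrite inE eqxx.
by apply: IH zs => y ys; apply: hs; rewrite inE ys orbT.
Qed.

Lemma face_dir_self v : cone v -> face_dir v v.
Proof.
move=> Kv; exists (1 / 2); first by rewrite divr_gt0.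
split.
  have -> : v + 1 / 2 *: v = (3 / 2) *: v by apply/rowP => i; rewrite !mxE; field.
  by apply: coneZ => //; rewrite divr_ge0.
have -> : v - 1 / 2 *: v = (1 / 2) *: v by apply/rowP => i; rewrite !mxE; field.
by apply: coneZ => //; rewrite divr_ge0.
Qed.

Lemma face_dir_mono a k mu d : cone k -> 0 < mu -> face_dir a d -> face_dir (mu *: a + k) d.
Proof.
move=> Kk mu0 [e e0 [K1 K2]]; exists (mu * e); first by rewrite mulr_gt0.
split.
  have -> : mu *: a + k + (mu * e) *: d = mu *: (a + e *: d) + k.
    by apply/rowP => i; rewrite !mxE; ring.
  by apply: coneD => //; apply: coneZ => //; rewrite ltW.
have -> : mu *: a + k - (mu * e) *: d = mu *: (a - e *: d) + k.
  by apply/rowP => i; rewrite !mxE; ring.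
by apply: coneD => //; apply: coneZ => //; rewrite ltW.
Qed.

Lemma face_dir_pair x1 x2 a b : C x1 -> C x2 -> 0 < a -> 0 <= b ->
  face_dir (a *: x1 + b *: x2) x1.
Proof.
move=> C1 C2 a0 b0; have Kb := coneZ b0 (cone_C C2).
suff : face_dir (a *: x1 + b *: x2) (a *: x1).
  by move=> /(face_dirZ a^-1); rewrite scalerA mulVf ?gt_eqF // scale1r.
exists 1 => //; split.
  have -> : a *: x1 + b *: x2 + 1 *: (a *: x1) = (2 * a) *: x1 + b *: x2.
    by apply/rowP => i; rewrite !mxE; ring.
  by apply: coneD => //; apply: coneZ; rewrite ?mulr_ge0 ?ltW //; exact: cone_C.
suff -> : a *: x1 + b *: x2 - 1 *: (a *: x1) = b *: x2 by [].
by apply/rowP => i; rewrite !mxE; ring.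
Qed.

(* rank_le v k: every free family of face directions of v has at most k
   elements, i.e. the face of the cone through v has dimension at most k. *)
Definition rank_le (v : V) (k : nat) : Prop :=
  forall s : seq V, free s -> (forall x, x \in s -> face_dir v x) -> (size s <= k)%N.

Lemma rank_le_dim v : rank_le v n.
Proof.
move=> s /eqP <- _; apply: leq_trans (dimvS (subvf _)) _.
by rewrite dimvf /dim /= mul1n.
Qed.

Lemma rank_le0 v : cone v -> rank_le v 0 -> v = 0.
Proof.
move=> Kv hr; apply/eqP; apply: contraTT isT => v0.
suff : (size [:: v] <= 0)%N by [].
apply: hr; first by rewrite seq1_free.
by move=> x; rewrite inE => /eqP ->; exact: face_dir_self.
Qed.

Lemma rank_drop u v x k : cone u -> rank_le v k.+1 ->
  (forall d, face_dir u d -> face_dir v d) -> face_dir v x -> ~ face_dir u x ->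
  rank_le u k.
Proof.
move=> Ku hr uv Lvx Nux s fs hs.
have xs : x \notin span s by apply/negP => /(face_dir_span Ku hs).
have := hr (x :: s); rewrite free_cons xs fs /= ltnS; apply => // y.
by rewrite inE => /orP [/eqP ->|/hs /uv].
Qed.

Lemma sub_neq0 x1 x2 c : C x1 -> C x2 -> x1 != x2 -> x1 - c *: x2 != 0.
Proof.
move=> C1 C2 ne; apply/eqP => h.
have [/eqP + _] : 1 = 0 :> R /\ - c = 0 by apply: (indep C1 C2 ne); rewrite scale1r scaleNr.
by rewrite oner_eq0.
Qed.

Lemma cone_sub_mono u y c c' : cone y -> c' <= c -> cone (u - c *: y) -> cone (u - c' *: y).
Proof.
move=> Ky cc Kc; have -> : u - c' *: y = (u - c *: y) + (c - c') *: y.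
  by apply/rowP => i; rewrite !mxE; ring.
by apply: coneD => //; apply: coneZ; rewrite ?subr_ge0.
Qed.

(* x1 - c x2 leaves the cone for large c, otherwise -x2 would be in the
   cone by closedness, contradicting pointedness. *)
Lemma sub_ray_bounded x1 x2 : C x1 -> C x2 -> x1 != x2 ->
  has_ubound [set c : R | cone (x1 - c *: x2)].
Proof.
move=> C1 C2 ne; apply: contrapT => nub.
have all c : cone (x1 - c *: x2).
  have : ~ ubound [set c : R | cone (x1 - c *: x2)] c by move=> h; apply: nub; exists c.
  move=> /existsNP [y /not_implyP [Ky /negP]]; rewrite -ltNge => cy.
  by apply: cone_sub_mono Ky; rewrite ?ltW //; exact: cone_C.
have Kneg : cone (- x2).
  have := @cone_line_closed (- x2) (- x1) (-1) 0 (ltrN10 R); rewrite scale0r addr0; apply.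
    move=> s; apply/eqP => h.
    have [_ /eqP] : - s = 0 /\ -1 = 0 :> R.
      by apply: (indep C1 C2 ne); rewrite -h; apply/rowP => i; rewrite !mxE; ring.
    by rewrite oppr_eq0 oner_eq0.
  move=> s /andP [s1 s0].
  have -> : - x2 + s *: - x1 = (- s) *: (x1 - (- s)^-1 *: x2).
    by apply/rowP => i; rewrite !mxE; field; rewrite lt_eqF.
  by apply: coneZ; rewrite ?oppr_ge0 ?ltW.
have := cone_pointed (cone_C C2) Kneg (subrr x2).
by move/eqP; rewrite (negbTE (C_neq0 C2)).
Qed.

(* For distinct x1, x2 in C there is a largest g with x1 - g x2 in the cone;
   then x2 is no longer a face direction of x1 - g x2. *)
Lemma boundary x1 x2 : C x1 -> C x2 -> x1 != x2 ->
  exists2 g, 0 <= g & cone (x1 - g *: x2) /\ ~ face_dir (x1 - g *: x2) x2.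
Proof.
move=> C1 C2 ne; pose G := [set c : R | cone (x1 - c *: x2)].
have G0 : G 0 by rewrite /G /= scale0r subr0; exact: cone_C.
have hsG : has_sup G by split; [exists 0 | exact: sub_ray_bounded].
exists (sup G); first exact: sup_upper_bound.
split.
  rewrite -scalerN; apply: (@cone_line_closed _ _ (sup G - 1)).
  - by rewrite ltrBlDr ltrDl ltr01.
  - by move=> s; rewrite scalerN; exact: sub_neq0.
  move=> s /andP [s1 s2]; have sp : 0 < sup G - s by rewrite subr_gt0.
  have [e Ge se] := @sup_adherent _ G (sup G - s) sp hsG.
  rewrite scalerN; apply: cone_sub_mono Ge; first exact: cone_C.
  by move: se; rewrite opprB addrCA subrr addr0 => /ltW.
move=> [e e0 [_ Km]]; have : G (sup G + e) by rewrite /G /= scalerDl opprD addrA.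
by move/(sup_upper_bound hsG); rewrite leNgt ltrDl e0.
Qed.

(* The two boundary coefficients satisfy g h < 1, by pointedness. *)
Lemma boundary_lt1 x1 x2 g h : C x1 -> C x2 -> x1 != x2 -> 0 <= g ->
  cone (x1 - g *: x2) -> cone (x2 - h *: x1) -> g * h < 1.
Proof.
move=> C1 C2 ne g0 K1 K2; rewrite ltNge; apply/negP => gh.
have K3 : cone (g *: (x2 - h *: x1) + (g * h - 1) *: x1).
  by apply: coneD; apply: coneZ; rewrite ?subr_ge0 //; exact: cone_C.
have sum0 : x1 - g *: x2 + (g *: (x2 - h *: x1) + (g * h - 1) *: x1) = 0.
  by apply/rowP => i; rewrite !mxE; ring.
by have /eqP := cone_pointed K1 K3 sum0; apply/negP; exact: sub_neq0.
Qed.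

Lemma pair_split x1 x2 a b : C x1 -> C x2 -> x1 != x2 -> 0 < a -> 0 < b ->
  exists u1 u2 p q, [/\ 0 < p, 0 < q, a *: x1 + b *: x2 = p *: u1 + q *: u2,
    cone u1 /\ ~ face_dir u1 x2 & cone u2 /\ ~ face_dir u2 x1].
Proof.
move=> C1 C2 ne a0 b0.
have [g g0 [K1 N1]] := boundary C1 C2 ne.
have ne' : x2 != x1 by rewrite eq_sym.
have [h h0 [K2 N2]] := boundary C2 C1 ne'.
have D0 : 0 < 1 - g * h by rewrite subr_gt0 (boundary_lt1 C1 C2 ne g0 K1 K2).
exists (x1 - g *: x2), (x2 - h *: x1), ((a + h * b) / (1 - g * h)),
  ((b + g * a) / (1 - g * h)); split => //.
- by rewrite divr_gt0 // ltr_pwDl // mulr_ge0 // ltW.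
- by rewrite divr_gt0 // ltr_pwDl // mulr_ge0 // ltW.
by apply/rowP => i; rewrite !mxE; field; rewrite gt_eqF.
Qed.

Definition ext_comb (v : V) : Prop := exists s : seq (R * V),
  (forall z, z \in s -> 0 <= z.1 /\ sext Phi C z.2) /\ v = \sum_(z <- s) z.1 *: z.2.

Lemma ext_comb0 : ext_comb 0.
Proof. by exists [::]; split => //; rewrite big_nil. Qed.

Lemma ext_comb_ext t c : sext Phi C c -> 0 <= t -> ext_comb (t *: c).
Proof.
move=> ec t0; exists [:: (t, c)]; split; last by rewrite big_seq1.
by move=> z; rewrite inE => /eqP ->.
Qed.

Lemma ext_comb_comb u w a b : ext_comb u -> ext_comb w -> 0 <= a -> 0 <= b ->
  ext_comb (a *: u + b *: w).
Proof.
move=> [s1 [h1 ->]] [s2 [h2 ->]] a0 b0.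
exists ([seq (a * z.1, z.2) | z <- s1] ++ [seq (b * z.1, z.2) | z <- s2]); split.
  move=> z; rewrite mem_cat => /orP [] /mapP [y ys ->] /=.
    by have [y0 ey] := h1 _ ys; rewrite mulr_ge0.
  by have [y0 ey] := h2 _ ys; rewrite mulr_ge0.
rewrite big_cat !big_map !scaler_sumr /=.
by congr (_ + _); apply: eq_bigr => z _; rewrite scalerA.
Qed.

Lemma extreme_or_pair v : cone v -> v != 0 -> s_extreme Phi C (rho v) \/
  exists x1 x2 a b, [/\ C x1, C x2 & x1 != x2] /\ [/\ 0 < a, 0 < b & v = a *: x1 + b *: x2].
Proof.
move=> Kv v0; have Cv := rho_cone v0 Kv.
case: (pselect (exists x1 x2 l, [/\ C x1, C x2, 0 < l < 1,
   rho v = sadd Phi l x1 x2 & x1 != x2])); last first.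
  move=> nE; left; split => // x1 x2 l C1 C2 l01 ce; apply: contrapT => ne; apply: nE.
  by exists x1, x2, l; split => //; apply/eqP.
move=> [x1 [x2 [l [C1 C2 /andP [l0 l1] rE ne]]]]; right.
pose w := l *: x1 + (1 - l) *: x2.
have w0 : w != 0 by apply: comb_nz; rewrite ?subr_ge0 ?ltW // addrC subrK ltr01.
pose lam := Phi v / Phi w; have lam0 : 0 < lam by rewrite divr_gt0 // Phi_gt0.
exists x1, x2, (lam * l), (lam * (1 - l)); split => //; split.
- exact: mulr_gt0.
- by rewrite mulr_gt0 // subr_gt0.
rewrite {1}(rho_scale v0) rE /sadd -/w rhoE //.
by apply/rowP => i; rewrite !mxE /lam /w; field; rewrite gt_eqF // Phi_gt0.
Qed.

Lemma ext_comb_of_rank k v : cone v -> rank_le v k -> ext_comb v.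
Proof.
elim: k v => [|k IH] v Kv hr; first by rewrite (rank_le0 Kv hr); exact: ext_comb0.
have [->|v0] := eqVneq v 0; first exact: ext_comb0.
have [ext|[x1 [x2 [a [b [[C1 C2 ne] [a0 b0 vE]]]]]]] := extreme_or_pair Kv v0.
  by rewrite (rho_scale v0); apply: ext_comb_ext.
have [u1 [u2 [p [q [p0 q0 vE' [K1 N1] [K2 N2]]]]]] := pair_split C1 C2 ne a0 b0.
have L1 : face_dir v x1 by rewrite vE; apply: face_dir_pair; rewrite ?ltW.
have L2 : face_dir v x2 by rewrite vE addrC; apply: face_dir_pair; rewrite ?ltW.
have sub1 d : face_dir u1 d -> face_dir v d.
  by rewrite vE vE'; apply: face_dir_mono => //; apply: coneZ; rewrite ?ltW.
have sub2 d : face_dir u2 d -> face_dir v d.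
  by rewrite vE vE' addrC; apply: face_dir_mono => //; apply: coneZ; rewrite ?ltW.
rewrite vE vE'; apply: ext_comb_comb; rewrite ?ltW //; apply: IH => //.
  exact: rank_drop hr sub1 L2 N1.
exact: rank_drop hr sub2 L1 N2.
Qed.


Lemma cone_ext_comb v : cone v -> ext_comb v.
Proof. by move=> Kv; apply: ext_comb_of_rank Kv (@rank_le_dim v). Qed.

Lemma cone_sum k (w : 'I_k -> R) (p : 'I_k -> V) : (forall i, 0 <= w i) ->
  (forall i, C (p i)) -> cone (\sum_(i < k) w i *: p i).
Proof.
move=> w0 Cp; apply: (big_ind cone cone0 coneD) => i _.
by apply: coneZ => //; exact: cone_C.
Qed.

Lemma cone_sum_eq0 k (w : 'I_k -> R) (p : 'I_k -> V) : (forall i, 0 <= w i) ->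
  (forall i, C (p i)) -> \sum_(i < k) w i *: p i = 0 -> forall i, w i = 0.
Proof.
move=> w0 Cp + i; rewrite (bigD1 i) //= => h.
have Kr : cone (\sum_(j < k | j != i) w j *: p j).
  by apply: (big_ind cone cone0 coneD) => j _; apply: coneZ => //; exact: cone_C.
have := cone_pointed (coneZ (w0 i) (cone_C (Cp i))) Kr h.
by move/eqP; rewrite scaler_eq0 (negbTE (C_neq0 (Cp i))) orbF => /eqP.
Qed.

Lemma sext_C : sext Phi C `<=` C.
Proof. by move=> x []. Qed.

Lemma conv_sext_neq0 : ~ Defs.conv (sext Phi C) 0.
Proof.
move=> [k [w [p [w0 [w1 [pe y0]]]]]].
have Cp i : C (p i) by apply: sext_C.
move: w1; rewrite big1 => [/eqP|i _]; last exact: cone_sum_eq0 (esym y0) i.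
by rewrite eq_sym oner_eq0.
Qed.

Lemma C_sub_sco : C `<=` sco Phi (sext Phi C).
Proof.
move=> c Cc; have [s [hs ce]] := cone_ext_comb (cone_C Cc).
pose w := fun i : 'I_(size s) => (nth (0, 0) s i).1.
pose p := fun i : 'I_(size s) => (nth (0, 0) s i).2.
have hi (i : 'I_(size s)) : 0 <= w i /\ sext Phi C (p i) by apply: hs; rewrite mem_nth.
have cE : c = \sum_(i < size s) w i *: p i by rewrite ce (big_nth (0, 0)) big_mkord.
pose W := \sum_(i < size s) w i.
have W0 : 0 < W.
  rewrite lt_def sumr_ge0 ?andbT; last by move=> i _; case: (hi i).
  apply/negP => /eqP W0; have := psumr_eq0P (fun i _ => proj1 (hi i)) W0 => allz.
  move: cE; rewrite big1 => [c0|i _]; last by rewrite allz // scale0r.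
  by move: (C_neq0 Cc); rewrite c0 eqxx.
exists (W^-1 *: c); last by rewrite rhoZ ?invr_gt0 ?rho_C // C_neq0.
exists (size s), (fun i => w i / W), p; split.
  by move=> i; apply: divr_ge0; [case: (hi i) | exact: ltW].
split; first by rewrite -mulr_suml divff // gt_eqF.
split; first by move=> i; case: (hi i).
by rewrite cE scaler_sumr; apply: eq_bigr => i _; rewrite scalerA mulrC.
Qed.

Lemma sco_sub_C : sco Phi (sext Phi C) `<=` C.
Proof.
move=> x [y [k [w [p [w0 [w1 [pe ->]]]]]] <-].
have Cp i : C (p i) by apply: sext_C.
apply: rho_cone; last exact: cone_sum.
by apply/eqP => y0; apply: conv_sext_neq0; rewrite -y0; exists k, w, p.
Qed.

(* C is nonempty, and each of its points needs at least one s-extreme point. *)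
Lemma sext_nonempty : sext Phi C !=set0.
Proof.
case: C_sconv => -[c /C_sub_sco [y [k [w [p [_ [w1 [pe _]]]]]] _]] _.
case: k w p w1 pe => [|k] w p w1 pe; last by exists (p ord0).
by move: w1; rewrite big_ord0 => /eqP; rewrite eq_sym oner_eq0.
Qed.

End SKreinMilman.

(* The main theorem. *)
Theorem mainTheorem17 (R : realType) (n : nat) (Phi : 'rV[R]_n -> R)
  (hn : (2 <= n)%N)
  (Phi_cont : continuous Phi)
  (Phi_ge0 : forall x, 0 <= Phi x)
  (Phi_hom : forall (t : R) x, 0 <= t -> Phi (t *: x) = t * Phi x)
  (Phi_eq0 : forall x, Phi x = 0 <-> x = 0)
  (C : set 'rV[R]_n)
  (C_sconv : s_convex Phi C)
  (C_closed : closed C) :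
  sext Phi C !=set0 /\ hull_addible Phi (sext Phi C) /\
  C = sco Phi (sext Phi C).
Proof.
have sext_ne : sext Phi C !=set0 by apply: sext_nonempty.
have sext_sph : sext Phi C `<=` sph Phi.
  by move=> x /sext_C; case: C_sconv => _ [+ _]; apply.
split => //; split; first by split => //; split => //; apply: conv_sext_neq0.
by apply/seteqP; split; [apply: C_sub_sco | apply: sco_sub_C].
Qed.
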